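(* Consider a played level $h$ (i.e. $p_h=1$) of the algorithm SSE described in the context, and let $X(t_h)\in\{u(t_h),\gamma(t_h)\}$ denote the arm pulled at time step $t_h$. At each time step $t_h\in\{3,\dots,T_h\}$, $$X(t_h)=u(t_h)\implies L_{h,u(t_h)}(t_h-1)\le L_{h,\gamma(t_h)}(t_h-1),$$ $$X(t_h)=\gamma(t_h)\implies U_{h,u(t_h)}(t_h-1)\le U_{h,\gamma(t_h)}(t_h-1),$$ and if $X(t_h)=(h,i)$ then $G_{h,\gamma(t_h)}(t_h)\le 2D_{h,i}(t_h-1)$.
   Context: Algorithm SSE (single played level $h$). A finite set $\mathcal{S}_h$ of arms $(h,i)$ is in contention; pulling an arm yields a real reward. Time $t_h$ counts pulls at this level; $X(s)$ is the arm pulled at time $s$ and $y(s)$ its reward; $N_{h,i}(t)$ = number of pulls of $(h,i)$ among the first $t$; $\hat f_{h,i}(t)$ = empirical mean of its rewards; $\hat\nu^2_{h,i}(t)=\frac{1}{N_{h,i}(t)}\sum_{s\le t}(y(s)-\hat f_{h,i}(s))^2\mathbb{1}\{X(s)=(h,i)\}$. With constants $B,C\ge1$, $\delta\in(0,1)$, a positive integer $N_H$, and $\epsilon_h\ge 0$: $\beta(t,\delta)=\log(15N_Ht^4/(4\delta))$; $D_{h,i}(t)=\sqrt{4B\hat\nu^2_{h,i}(t)\beta(t,\delta)/N_{h,i}(t)}+2\sqrt{2BC}\beta(t,\delta)/(N_{h,i}(t)-1)$; $U_{h,i}(t)=\hat f_{h,i}(t)+D_{h,i}(t)$; $L_{h,i}(t)=\hat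 f_{h,i}(t)-D_{h,i}(t)$; $G_{h,i}(t)=\max_{j\ne i,(h,j)\in\mathcal{S}_h}U_{h,j}(t-1)-L_{h,i}(t-1)$; $\gamma(t)=\arg\min_{(h,i)\in\mathcal{S}_h}G_{h,i}(t)$; $u(t)=\arg\max_{(h,i)\in\mathcal{S}_h,i\ne\gamma(t)}U_{h,i}(t-1)$. The game first pulls every arm of $\mathcal{S}_h$ twice; then, while $G_{h,\gamma(t_h)}(t_h)\ge\epsilon_h$, it pulls $X(t_h)=\arg\max_{i\in\{\gamma(t_h),u(t_h)\}}D_{h,i}(t_h-1)$ and increments $t_h$; $T_h$ is the first time with $G_{h,\gamma(T_h)}(T_h)<\epsilon_h$. *)

From HB Require Import structures.
From mathcomp Require Import all_boot all_order all_algebra.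
From mathcomp Require Import reals exp.
Set Implicit Arguments. Unset Strict Implicit. Unset Printing Implicit Defensive.
Import Order.TTheory GRing.Theory Num.Theory.
Local Open Scope ring_scope.

(* One played level h of SSE.  The arms of S_h form the finite type A.
   Time steps are s = 1, 2, ...; X s is the arm pulled at time s, y s its reward. *)
Section SSE.
Variables (R : realType) (A : finType).
Variables (X : nat -> A) (y : nat -> R).
Variables (B C delta : R) (NH : nat).

Definition Npulls (i : A) (t : nat) : nat := \sum_(1 <= s < t.+1 | X s == i) 1%N.

Definition fhat (i : A) (t : nat) : R :=
  (Npulls i t)%:R^-1 * \sum_(1 <= s < t.+1 | X s == i) y s.

Definition nuhat2 (i : A) (t : nat) : R :=
  (Npulls i t)%:R^-1 * \sum_(1 <= s < t.+1 | X s == i) (y s - fhat i s) ^+ 2.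

Definition beta (t : nat) : R := ln (15 * NH%:R * t%:R ^+ 4 / (4 * delta)).

Definition Dw (i : A) (t : nat) : R :=
  Num.sqrt (4 * B * nuhat2 i t * beta t / (Npulls i t)%:R)
  + 2 * Num.sqrt (2 * B * C) * beta t / ((Npulls i t)%:R - 1).

Definition Ub (i : A) (t : nat) : R := fhat i t + Dw i t.
Definition Lb (i : A) (t : nat) : R := fhat i t - Dw i t.

(* max_{j <> i} U_j(t-1); the seed of the fold is U_j for some j <> i
   (when S_h has a single arm the value is irrelevant) *)
Definition maxU_other (i : A) (t : nat) : R :=
  \big[Num.max/Ub (odflt i [pick j | j != i]) t.-1]_(j | j != i) Ub j t.-1.

Definition Gap (i : A) (t : nat) : R := maxU_other i t - Lb i t.-1.

(* The run of the game at this level, with stopping time T: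
   - the first 2|S_h| pulls pull every arm exactly twice;
   - at every loop time 2|S_h| < t <= T, gam t is an argmin of G(t),
     u t is an argmax of U(t-1) among arms different from gam t, and
     X t is the one of gam t, u t with the larger D(t-1) (ties either way);
   - G_{gam t}(t) >= eps for loop times t < T, and G_{gam T}(T) < eps. *)
Definition SSE_run (gam u : nat -> A) (eps : R) (T : nat) : Prop :=
  [/\ (forall i : A, Npulls i (2 * #|A|) = 2%N),
      (2 * #|A| < T)%N,
      (forall t, (2 * #|A| < t <= T)%N ->
         [/\ (forall i : A, Gap (gam t) t <= Gap i t),
             u t != gam t,
             (forall i : A, i != gam t -> Ub i t.-1 <= Ub (u t) t.-1) &
             (X t = gam t /\ Dw (u t) t.-1 <= Dw (gam t) t.-1) \/
             (X t = u t /\ Dw (gam t) t.-1 <= Dw (u t) t.-1)]),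
      (forall t, (2 * #|A| < t < T)%N -> eps <= Gap (gam t) t) &
      Gap (gam T) T < eps].

End SSE.

From HB Require Import structures.
From mathcomp Require Import all_boot all_order all_algebra.
From mathcomp Require Import reals exp.
From mathcomp Require Import lra.
Set Implicit Arguments. Unset Strict Implicit. Unset Printing Implicit Defensive.
Import Order.TTheory GRing.Theory Num.Theory.
Local Open Scope ring_scope.

(* Write [U = f + D] and [L = f - D] for the confidence bounds of an arm, and
   let [g = gam t], [v = u t].  Since [v] maximises [U] off [g], the gap of [g]
   is [U_v - L_g], while the gap of [v] is at most [max(U_g, U_v) - L_v].  The
   minimality [G_g <= G_v] then yields [L_v <= L_g] or [f_v <= f_g], and either
   alternative gives [L_v <= L_g] when [D_g <= D_v] and [U_v <= U_g] when
   [D_v <= D_g].  Hence [U_v - L_g] is at most the width [U - L = 2 D] of the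
   arm pulled, the one with the larger radius. *)

Section Intervals.
Variables (R : realFieldType) (fg Dg fv Dv : R).

Lemma gap_le_cases M :
  (fv + Dv) - (fg - Dg) <= M - (fv - Dv) -> M <= Num.max (fg + Dg) (fv + Dv) ->
  fv - Dv <= fg - Dg \/ fv <= fg.
Proof. by move=> hgap; rewrite le_max => /orP[] hM; [right | left]; lra. Qed.

Hypothesis lower_le_or_center_le : fv - Dv <= fg - Dg \/ fv <= fg.

Lemma lower_le_of_radius_le : Dg <= Dv -> fv - Dv <= fg - Dg.
Proof. by case: lower_le_or_center_le => h hD; lra. Qed.

Lemma upper_le_of_radius_le : Dv <= Dg -> fv + Dv <= fg + Dg.
Proof. by case: lower_le_or_center_le => h hD; lra. Qed.

Lemma gap_le_twice_Dg : Dv <= Dg -> (fv + Dv) - (fg - Dg) <= 2 * Dg.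
Proof. by move/upper_le_of_radius_le; lra. Qed.

Lemma gap_le_twice_Dv : Dg <= Dv -> (fv + Dv) - (fg - Dg) <= 2 * Dv.
Proof. by move/lower_le_of_radius_le; lra. Qed.

End Intervals.

Section MaxUOther.
Variables (R : realType) (A : finType) (X : nat -> A) (y : nat -> R).
Variables (B C delta : R) (NH : nat).

Local Notation U := (Ub X y B C delta NH).
Local Notation maxU := (maxU_other X y B C delta NH).

Lemma le_maxU_other i j t : j != i -> U j t.-1 <= maxU i t.
Proof. exact: (@le_bigmax_cond _ _ _ _ j (fun k => k != i)). Qed.

Lemma maxU_other_le i k t M : k != i ->
  (forall j, j != i -> U j t.-1 <= M) -> maxU i t <= M.
Proof.
move=> ki hM; apply: bigmax_le => //.
by case: pickP => [j /= ji | /(_ k) /=]; [exact: hM | rewrite ki].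
Qed.

Lemma maxU_other_argmax i v t : v != i ->
  (forall j, j != i -> U j t.-1 <= U v t.-1) -> maxU i t = U v t.-1.
Proof.
move=> vi hv; apply/eqP; rewrite eq_le le_maxU_other // andbT.
exact: maxU_other_le vi hv.
Qed.

Lemma maxU_other_argmax_le g v t : v != g ->
  (forall j, j != g -> U j t.-1 <= U v t.-1) ->
  maxU v t <= Num.max (U g t.-1) (U v t.-1).
Proof.
move=> vg hv; apply: (maxU_other_le (k := g)); first by rewrite eq_sym.
move=> j _; rewrite le_max; have [-> | jg] := eqVneq j g; first by rewrite lexx.
by rewrite hv ?orbT.
Qed.

End MaxUOther.

Theorem lemma3 (R : realType) (A : finType) (X : nat -> A) (y : nat -> R)
  (B C delta : R) (NH : nat) (eps : R) (gam u : nat -> A) (T : nat) :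
  1 <= B -> 1 <= C -> 0 < delta < 1 -> (0 < NH)%N -> 0 <= eps ->
  SSE_run X y B C delta NH gam u eps T ->
  forall t : nat, (2 * #|A| < t <= T)%N ->
    [/\ (X t = u t -> Lb X y B C delta NH (u t) t.-1 <= Lb X y B C delta NH (gam t) t.-1),
        (X t = gam t -> Ub X y B C delta NH (u t) t.-1 <= Ub X y B C delta NH (gam t) t.-1) &
        Gap X y B C delta NH (gam t) t <= 2 * Dw X y B C delta NH (X t) t.-1].
Proof.
move=> _ _ _ _ _ [_ _ run _ _] t ht.
have [gam_min u_ne u_max pulled] := run t ht.
have gap_cmp := gam_min (u t); rewrite /Gap (maxU_other_argmax u_ne u_max) in gap_cmp *.
have cases := gap_le_cases gap_cmp (maxU_other_argmax_le u_ne u_max).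
case: pulled => [[-> hD] | [-> hD]].
- split=> [ug | _ |]; first by move: u_ne; rewrite ug eqxx.
  + exact: upper_le_of_radius_le cases hD.
  + exact: gap_le_twice_Dg cases hD.
- split=> [_ | gu |].
  + exact: lower_le_of_radius_le cases hD.
  + by move: u_ne; rewrite gu eqxx.
  + exact: gap_le_twice_Dv cases hD.
Qed.
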